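(* Let $d\ge2$, $n\ge1$. For every $n$-qudit unitary $U$, $$\mathrm{CiS}[U]=\max_{O:\ \|O\|_2=1,\ \mathrm{Tr}(O)=0}\big|I[UOU^\dagger]-I[O]\big|.$$
   Context: Let $V=\mathbb{Z}_d\times\mathbb{Z}_d$; for $a=(s,t)\in V$, $P_a=X^sZ^t$ with $X|j\rangle=|j+1\bmod d\rangle$, $Z|j\rangle=e^{2\pi ij/d}|j\rangle$; $P_{\vec a}=\bigotimes_iP_{a_i}$, $|\vec a|=\#\{i:a_i\ne(0,0)\}$. $\|A\|_2=(d^{-n}\mathrm{Tr}(A^\dagger A))^{1/2}$. For $\|O\|_2=1$, $P_O[\vec a]=d^{-2n}|\mathrm{Tr}(OP_{\vec a})|^2$, $I[O]=\sum_{\vec a}|\vec a|P_O[\vec a]$, and $\mathrm{CiS}[U]=\max_{O:\|O\|_2=1}|I[UOU^\dagger]-I[O]|$. *)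

From HB Require Import structures.
From mathcomp Require Import all_boot all_order all_algebra.
From mathcomp Require Import complex.
From mathcomp Require Import boolp classical_sets reals trigo.
Set Implicit Arguments. Unset Strict Implicit. Unset Printing Implicit Defensive.
Import Order.TTheory GRing.Theory Num.Theory.
Local Open Scope ring_scope.
Local Open Scope complex_scope.
Local Open Scope classical_set_scope.

Section Qudits.
Variable R : realType.
Notation C := (R[i]).
Variables (n d : nat).

Definition basis := {ffun 'I_n -> 'I_d}.
(* an operator on (C^d)^{\otimes n}, given by its matrix entries <x|A|y> *)
Definition op := basis -> basis -> C.

Definition op_mul (A B : op) : op := fun x y => \sum_(z : basis) A x z * B z y.
Definition op_adj (A : op) : op := fun x y => (A y x)^*.
Definition op_id : op := fun x y => (x == y)%:R.
Definition op_tr (A : op) : C := \sum_(x : basis) A x x.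

Definition unitary (U : op) : Prop :=
  op_mul (op_adj U) U = op_id /\ op_mul U (op_adj U) = op_id.

Definition sqmod (z : C) : R := (complex.Re z) ^+ 2 + (complex.Im z) ^+ 2.

Definition norm2 (A : op) : R :=
  Num.sqrt ((d%:R ^+ n)^-1 * complex.Re (op_tr (op_mul (op_adj A) A))).

Definition omega : C := (cos (2 * pi / d%:R)) +i* (sin (2 * pi / d%:R)).

Definition pauli_label := {ffun 'I_n -> 'I_d * 'I_d}.

(* <k| X^s Z^t |j> = omega^(t j) [k = j + s mod d] *)
Definition qudit_pauli (s t : 'I_d) (k j : 'I_d) : C :=
  ((k : nat) == ((j + s) %% d)%N)%:R * omega ^+ (t * j)%N.

(* P_a = tensor product of the X^{s_i} Z^{t_i} *)
Definition pauli (a : pauli_label) : op :=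
  fun x y => \prod_(i < n) qudit_pauli (a i).1 (a i).2 (x i) (y i).

Definition weight (a : pauli_label) : nat :=
  #|[set i : 'I_n | ((a i).1 != 0%N :> nat) || ((a i).2 != 0%N :> nat)]%SET|.

Definition pauli_weight (O : op) (a : pauli_label) : R :=
  (d%:R ^+ (2 * n))^-1 * sqmod (op_tr (op_mul O (pauli a))).

Definition influence (O : op) : R :=
  \sum_(a : pauli_label) (weight a)%:R * pauli_weight O a.

Definition conj_by (U O : op) : op := op_mul (op_mul U O) (op_adj U).

(* CiS[U] = max over ||O||_2 = 1 of |I[U O U^dag] - I[O]|  (max realized as sup) *)
Definition CiS (U : op) : R :=
  sup [set r : R | exists O : op, norm2 O = 1 /\
                     r = `|influence (conj_by U O) - influence O|].

Definition CiS_traceless (U : op) : R :=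
  sup [set r : R | exists O : op, norm2 O = 1 /\ op_tr O = 0 /\
                     r = `|influence (conj_by U O) - influence O|].
End Qudits.

(* Adding a multiple of the identity to O changes neither I[O] nor I[U O U^dag]:
   every non-identity Pauli operator is traceless, and conjugation by U fixes the
   identity.  Scaling O by k multiplies both influences by k^2.  The traceless
   part O - (Tr O / d^n) I of a unit-norm O has ||.||_2 <= 1, so rescaling it to
   unit norm multiplies |I[U O U^dag] - I[O]| by a factor >= 1 (and if the
   traceless part vanishes, the gap is 0).  Hence every value in the supremum
   defining CiS[U] is dominated by a value attained on traceless operators. *)

From Pilot Require Import Defs.
From HB Require Import structures.
From mathcomp Require Import all_boot all_order all_algebra.
From mathcomp Require Import complex.
From mathcomp Require Import boolp classical_sets reals trigo.
From mathcomp Require Import ring lra.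

Set Implicit Arguments. Unset Strict Implicit. Unset Printing Implicit Defensive.
Import Order.TTheory GRing.Theory Num.Theory.
Local Open Scope ring_scope.

Lemma sup_cofinal (R : realType) (S T : set R) :
  (T `<=` S)%classic -> (S `<=` down T)%classic -> sup S = sup T.
Proof.
move=> TS ST; rewrite -sup_down -[sup T]sup_down; congr sup.
apply/seteqP; split=> x /downP[y].
- by move=> /ST /downP[z Tz yz] xy; apply/downP; exists z; rewrite // (le_trans xy).
- by move=> /TS Sy xy; apply/downP; exists y.
Qed.

Lemma sum_delta (T : finType) (V : pzSemiRingType) (F : T -> V) (x : T) :
  \sum_z F z * (z == x)%:R = F x.
Proof. by rewrite (bigD1 x) //= eqxx mulr1 big1 ?addr0 // => z /negbTE ->; rewrite mulr0. Qed.

Lemma sum_expr_unity_root (F : idomainType) (z : F) (m : nat) :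
  z ^+ m = 1 -> z != 1 -> \sum_(j < m) z ^+ j = 0.
Proof.
move=> zm z1; have /eqP : (z - 1) * \sum_(j < m) z ^+ j = 0 by rewrite -subrX1 zm subrr.
by rewrite mulf_eq0 subr_eq0 (negbTE z1) => /eqP.
Qed.

Local Open Scope complex_scope.

Section RootOfUnity.
Variables (R : realType) (d : nat).
Local Notation omega := (omega R d).

Lemma omega_expr k :
  omega ^+ k = cos (k%:R * (2 * pi / d%:R)) +i* sin (k%:R * (2 * pi / d%:R)).
Proof.
set th := 2 * pi / d%:R.
elim: k => [|k IH]; first by rewrite expr0 !mul0r cos0 sin0.
rewrite exprS IH /Defs.omega -/th -[k.+1%:R]natr1 mulrDl mul1r cosD sinD; simpc.
by congr (_ +i* _); ring.
Qed.

Lemma omega_exprd : (0 < d)%N -> omega ^+ d = 1.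
Proof.
move=> d_gt0; rewrite omega_expr mulrC divfK ?pnatr_eq0 -?lt0n //.
by rewrite mulr_natl cos2pi sin2pi.
Qed.

Lemma omega_expr_neq1 t : (0 < t < d)%N -> omega ^+ t != 1.
Proof.
move=> /andP[t_gt0 t_lt_d]; apply/negP => /eqP; rewrite omega_expr => -[cos1 _].
have d_gt0 : 0 < d%:R :> R by rewrite ltr0n (ltn_trans t_gt0).
pose y : R := t%:R * pi / d%:R.
have y_gt0 : 0 < y by rewrite divr_gt0 // mulr_gt0 ?pi_gt0 ?ltr0n.
have y_lt_pi : y < pi by rewrite ltr_pdivrMr // mulrC ltr_pM2l ?pi_gt0 ?ltr_nat.
have ty : t%:R * (2 * pi / d%:R) = y *+ 2 by rewrite /y -mulr_natr; ring.
have : sin y ^+ 2 = 0 by move: cos1; rewrite ty cos_mulr2n sin2cos2; lra.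
move/eqP; rewrite sqrf_eq0 => /eqP sin0.
suff : 0 < sin y by rewrite sin0 ltxx.
by apply: sin_gt0_pi; rewrite y_gt0.
Qed.
End RootOfUnity.

Section PauliTrace.
Variables (R : realType) (n d : nat).

Lemma qudit_pauli_trace (s t : 'I_d) : (s != 0 :> nat) || (t != 0 :> nat) ->
  \sum_(j : 'I_d) qudit_pauli R s t j j = 0.
Proof.
have [s0 /= t_neq0 | s_neq0 _] := eqVneq (s : nat) 0%N.
  have t_lt_d : (0 < t < d)%N by rewrite lt0n t_neq0 (ltn_ord t).
  rewrite (eq_bigr (fun j : 'I_d => (omega R d ^+ t) ^+ j)) => [|j _]; last first.
    by rewrite /qudit_pauli s0 addn0 modn_small // eqxx mul1r exprM.
  apply: sum_expr_unity_root; last exact: omega_expr_neq1.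
  by rewrite -exprM mulnC exprM omega_exprd ?expr1n // (leq_ltn_trans _ (ltn_ord t)).
apply: big1 => j _; rewrite /qudit_pauli.
suff /negbTE -> : (j : nat) != ((j + s) %% d)%N by rewrite mul0r.
rewrite -{1}(modn_small (ltn_ord j)) -{1}[j : nat]addn0 eqn_modDl mod0n.
by rewrite modn_small // eq_sym.
Qed.

Lemma pauli_trace (a : pauli_label n d) : weight a != 0%N -> op_tr (pauli R a) = 0.
Proof.
rewrite /weight cards_eq0; case/set0Pn => i; rewrite inE => a_i.
rewrite /op_tr /pauli -(bigA_distr_bigA (fun i j => qudit_pauli R (a i).1 (a i).2 j j)).
by rewrite (bigD1 i) //= qudit_pauli_trace // mul0r.
Qed.
End PauliTrace.

Section ComplexSquaredModulus.
Variable R : realType.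
Implicit Types z w : R[i].

Lemma sqmodE z : (sqmod z)%:C = z * z^*.
Proof. by case: z => a b; rewrite /sqmod /=; simpc; congr (_ +i* _); ring. Qed.

Lemma sqmod_ge0 z : 0 <= sqmod z.
Proof. by rewrite addr_ge0 // sqr_ge0. Qed.

Lemma sqmod_eq0 z : (sqmod z == 0) = (z == 0).
Proof.
apply/idP/eqP => [|->]; last by rewrite /sqmod /= expr0n addr0.
by rewrite -(inj_eq (@complexI R)) sqmodE mulf_eq0 conjc_eq0 orbb => /eqP.
Qed.

Lemma sqmod_shift w c (b : bool) :
  (sqmod (w + c * b%:R))%:C = (sqmod w)%:C + (c * w^* + c^* * w + c * c^*) * b%:R.
Proof.
case: b; last by rewrite !mulr0 !addr0.
by rewrite !mulr1 !sqmodE (rmorphD conjc); ring.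
Qed.

Lemma sqmodZ (k : R) z : sqmod (k%:C * z) = k ^+ 2 * sqmod z.
Proof. by case: z => a b; rewrite /sqmod /=; ring. Qed.

End ComplexSquaredModulus.

Section Operators.
Variables (R : realType) (n d : nat).
Local Notation C := R[i].
Local Notation op := (op R n d).
Local Notation basis := (basis n d).
Local Notation D := ((d ^ n)%:R).
Implicit Types (O A U : op) (c k : C) (a : pauli_label n d).

Definition op_shift O c : op := fun x y => O x y + c * op_id R x y.
Definition op_scale k O : op := fun x y => k * O x y.
Definition pauli_coef O a : C := op_tr (op_mul O (pauli R a)).

Lemma card_basis : #|{: basis}| = (d ^ n)%N.
Proof. by rewrite card_ffun !card_ord. Qed.

Lemma op_tr_shift O c : op_tr (op_shift O c) = op_tr O + c * D.
Proof.
rewrite /op_tr /op_shift big_split /= -mulr_sumr /op_id; congr (_ + _ * _).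
by under eq_bigr do rewrite eqxx; rewrite sumr_const card_basis.
Qed.

Lemma op_tr_scale k O : op_tr (op_scale k O) = k * op_tr O.
Proof. by rewrite /op_tr /op_scale mulr_sumr. Qed.

Lemma conj_by_shift U O c : op_mul U (op_adj U) = @op_id R n d ->
  conj_by U (op_shift O c) = op_shift (conj_by U O) c.
Proof.
move=> UU'; apply: funext => x; apply: funext => y; rewrite /conj_by /op_shift.
have -> : op_id R x y = op_mul U (op_adj U) x y by rewrite UU'.
rewrite /op_mul /op_id mulr_sumr -big_split /=.
apply: eq_bigr => z _; under eq_bigr do rewrite mulrDr.
rewrite big_split /= mulrDl; congr (_ + _).
under eq_bigr do rewrite mulrCA.
by rewrite -mulr_sumr sum_delta mulrA.
Qed.

Lemma conj_by_scale U O k : conj_by U (op_scale k O) = op_scale k (conj_by U O).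
Proof.
apply: funext => x; apply: funext => y.
rewrite /conj_by /op_scale /op_mul mulr_sumr; apply: eq_bigr => z _.
rewrite !mulr_suml mulr_sumr; apply: eq_bigr => w _.
by rewrite !mulrA [U x w * k]mulrC.
Qed.

Lemma pauli_coef_shift O c a :
  pauli_coef (op_shift O c) a = pauli_coef O a + c * op_tr (pauli R a).
Proof.
rewrite /pauli_coef /op_tr /op_mul /op_shift /op_id mulr_sumr -big_split /=.
apply: eq_bigr => x _; under eq_bigr do rewrite mulrDl.
rewrite big_split /=; congr (_ + _).
by under eq_bigr do rewrite eq_sym mulrAC -mulrA; rewrite -mulr_sumr sum_delta.
Qed.

Lemma pauli_coef_scale k O a : pauli_coef (op_scale k O) a = k * pauli_coef O a.
Proof.
rewrite /pauli_coef /op_tr /op_mul /op_scale mulr_sumr; apply: eq_bigr => x _.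
by rewrite mulr_sumr; apply: eq_bigr => z _; rewrite mulrA.
Qed.

Lemma influence_shift O c : influence (op_shift O c) = influence O.
Proof.
apply: eq_bigr => a _; have [-> | wa] := eqVneq (weight a) 0%N; first by rewrite !mul0r.
have := pauli_coef_shift O c a; rewrite (pauli_trace R wa) mulr0 addr0.
by rewrite /pauli_weight /pauli_coef => ->.
Qed.

Lemma influence_scale (k : R) O : influence (op_scale k%:C O) = k ^+ 2 * influence O.
Proof.
rewrite /influence mulr_sumr; apply: eq_bigr => a _.
have := pauli_coef_scale k%:C O a; rewrite /pauli_weight /pauli_coef => ->.
by rewrite sqmodZ; ring.
Qed.
End Operators.

Section HilbertSchmidt.
Variables (R : realType) (n d : nat).
Local Notation C := R[i].
Local Notation op := (op R n d).
Local Notation D := ((d ^ n)%:R).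
Implicit Types (O A : op) (c : C).

Definition hs_sqnorm A : R := \sum_x \sum_z sqmod (A z x).

Lemma dim_gt0 : (0 < d)%N -> 0 < D :> R.
Proof. by move=> d_gt0; rewrite ltr0n expn_gt0 d_gt0. Qed.

Lemma hs_sqnormE A : op_tr (op_mul (op_adj A) A) = (hs_sqnorm A)%:C.
Proof.
rewrite /op_tr /op_mul /op_adj rmorph_sum; apply: eq_bigr => x _.
by rewrite rmorph_sum; apply: eq_bigr => z _; rewrite mulrC -sqmodE.
Qed.

Lemma norm2E A : norm2 A = Num.sqrt (D^-1 * hs_sqnorm A).
Proof. by rewrite /norm2 hs_sqnormE natrX. Qed.

Lemma hs_sqnorm_ge0 A : 0 <= hs_sqnorm A.
Proof. by do 2!apply: sumr_ge0 => ? _; exact: sqmod_ge0. Qed.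

Lemma norm2_eq1 A : (0 < d)%N -> norm2 A = 1 <-> hs_sqnorm A = D.
Proof.
move=> /dim_gt0 D_gt0.
rewrite norm2E; split => [norm1 | ->]; last by rewrite mulVf ?gt_eqF ?sqrtr1.
have Dinv_ge0 : 0 <= D^-1 :> R by rewrite invr_ge0 ltW.
have := sqr_sqrtr (mulr_ge0 Dinv_ge0 (hs_sqnorm_ge0 A)); rewrite norm1 expr1n => hs1.
apply: (mulfI (invr_neq0 (lt0r_neq0 D_gt0))).
by rewrite -hs1 mulVf ?gt_eqF.
Qed.

Lemma hs_sqnorm_eq0 A : hs_sqnorm A = 0 -> forall x y, A x y = 0.
Proof.
move=> /eqP; rewrite psumr_eq0 => [/allP hs0 x y|x _]; last first.
  by apply: sumr_ge0 => ? _; exact: sqmod_ge0.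
move: (hs0 y (mem_index_enum y)); rewrite psumr_eq0 => [/allP /(_ x (mem_index_enum x))|z _]; last exact: sqmod_ge0.
by rewrite sqmod_eq0 => /eqP.
Qed.

Lemma hs_sqnorm_scale (k : R) A : hs_sqnorm (op_scale k%:C A) = k ^+ 2 * hs_sqnorm A.
Proof.
rewrite /hs_sqnorm mulr_sumr; apply: eq_bigr => x _.
by rewrite mulr_sumr; apply: eq_bigr => z _; exact: sqmodZ.
Qed.

Lemma hs_sqnorm_shift O c : (hs_sqnorm (op_shift O c))%:C =
  (hs_sqnorm O)%:C + c * (op_tr O)^* + c^* * op_tr O + D * (c * c^*).
Proof.
rewrite /hs_sqnorm /op_tr (rmorph_sum conjc) !mulr_sumr.
have -> : D * (c * c^*) = \sum_(x : basis n d) c * c^*.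
  by rewrite sumr_const card_basis mulr_natl.
rewrite 2!rmorph_sum /= -!big_split /=; apply: eq_bigr => x _.
rewrite rmorph_sum /=; under eq_bigr do rewrite sqmod_shift.
by rewrite big_split /= sum_delta rmorph_sum /= !addrA.
Qed.

Lemma hs_sqnorm_center O c : op_tr O = c * D ->
  hs_sqnorm (op_shift O (- c)) = hs_sqnorm O - D * sqmod c.
Proof.
move=> trO; apply: (@complexI R).
rewrite hs_sqnorm_shift trO (rmorphM conjc) (rmorphN conjc) !rmorph_nat.
by rewrite rmorphB rmorphM rmorph_nat /= sqmodE; ring.
Qed.
End HilbertSchmidt.

Section TracelessReduction.
Variables (R : realType) (n d : nat).
Hypotheses (d_gt1 : (1 < d)%N) (n_gt0 : (0 < n)%N).
Local Notation op := (op R n d).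
Local Notation D := ((d ^ n)%:R).
Let d_gt0 : (0 < d)%N := ltnW d_gt1.
Let D_gt0 : 0 < D :> R := dim_gt0 R n d_gt0.

Lemma exists_traceless_norm2_eq1 : exists O : op, norm2 O = 1 /\ op_tr O = 0.
Proof.
pose e0 : basis n d := [ffun=> Ordinal (ltnW d_gt1)].
pose e1 : basis n d := [ffun=> Ordinal d_gt1].
have e01 : e0 != e1.
  by apply/eqP => /(congr1 (fun e : basis n d => val (e (Ordinal n_gt0)))); rewrite !ffunE.
pose O : op := fun z x => if (z == e0) && (x == e1) then (Num.sqrt D)%:C else 0.
exists O; split; last by apply: big1 => x _; rewrite /O; case: eqP => // ->; rewrite (negbTE e01).
apply/norm2_eq1 => //.
have sqmod0 : sqmod (0 : R[i]) = 0 by rewrite /sqmod /= expr0n addr0.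
rewrite /hs_sqnorm (bigD1 e1) //= [X in _ + X]big1 ?addr0 => [|x /negbTE x_e1]; last first.
  by apply: big1 => z _; rewrite /O x_e1 andbF.
rewrite (bigD1 e0) //= [X in _ + X]big1 ?addr0 => [|z /negbTE z_e0]; last first.
  by rewrite /O z_e0.
by rewrite /O !eqxx /sqmod /= expr0n addr0 (sqr_sqrtr (ltW D_gt0)).
Qed.

Variable U : op.
Hypothesis UU' : op_mul U (op_adj U) = @op_id R n d.

Definition influence_gap (O : op) : R := influence (conj_by U O) - influence O.

Lemma influence_gap_shift O c : influence_gap (op_shift O c) = influence_gap O.
Proof. by rewrite /influence_gap conj_by_shift // !influence_shift. Qed.

Lemma influence_gap_scale (k : R) O :
  influence_gap (op_scale k%:C O) = k ^+ 2 * influence_gap O.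
Proof. by rewrite /influence_gap conj_by_scale !influence_scale mulrBr. Qed.

Lemma influence_gap_traceless_dominates O : norm2 O = 1 ->
  exists2 O', norm2 O' = 1 /\ op_tr O' = 0 & `|influence_gap O| <= `|influence_gap O'|.
Proof.
move=> /(norm2_eq1 _ d_gt0) hsO.
pose c : R[i] := op_tr O / D; pose Oc := op_shift O (- c).
have trO : op_tr O = c * D by rewrite divfK // pnatr_eq0 -lt0n expn_gt0 d_gt0.
have trOc : op_tr Oc = 0 by rewrite op_tr_shift trO mulNr subrr.
have hsOc : hs_sqnorm Oc = D - D * sqmod c by rewrite hs_sqnorm_center // hsO.
have gapO : influence_gap O = influence_gap Oc by rewrite influence_gap_shift.
have [hs0 | hs_neq0] := eqVneq (hs_sqnorm Oc) 0.
  have [O' [O'1 trO']] := exists_traceless_norm2_eq1.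
  exists O' => //; rewrite gapO.
  have -> : Oc = op_scale 0%:C Oc.
    by apply: funext => x; apply: funext => y; rewrite /op_scale mul0r hs_sqnorm_eq0.
  by rewrite influence_gap_scale expr0n mul0r normr0.
have hs_gt0 : 0 < hs_sqnorm Oc by rewrite lt_def hs_neq0 hs_sqnorm_ge0.
pose k := Num.sqrt (D / hs_sqnorm Oc).
have k2 : k ^+ 2 = D / hs_sqnorm Oc := sqr_sqrtr (divr_ge0 (ltW D_gt0) (ltW hs_gt0)).
exists (op_scale k%:C Oc); first split.
- by apply/norm2_eq1 => //; rewrite hs_sqnorm_scale k2 divfK // gt_eqF.
- by rewrite op_tr_scale trOc mulr0.
rewrite influence_gap_scale gapO normrM (ger0_norm (sqr_ge0 k)) k2.
apply: ler_peMl; first exact: normr_ge0.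
by rewrite ler_pdivlMr // mul1r hsOc gerBl (mulr_ge0 (ltW D_gt0) (sqmod_ge0 c)).
Qed.
End TracelessReduction.

Theorem mainTheorem19 (R : realType) (n d : nat) (hd : (2 <= d)%N) (hn : (1 <= n)%N)
  (U : op R n d) (hU : unitary U) :
  CiS U = CiS_traceless U.
Proof.
apply: sup_cofinal => [_ [O [O1 [_ ->]]] | _ [O [O1 ->]]]; first by exists O.
have [O' [O'1 trO'] gap_le] := influence_gap_traceless_dominates hd hn hU.2 O1.
by apply/downP; exists `|influence_gap U O'|; first by exists O'.
Qed.
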